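(* Let $X$ be a locale with frame presentation $\mathcal{O}X = \langle G \mid R\rangle$, let $i_X\colon X \hookrightarrow \Sigma^G$ be the corresponding sublocale inclusion, and let $\mathrm{ev}\colon \Sigma^{\Sigma^G}\times\Sigma^G\to\Sigma$ be the evaluation map of the exponential $\Sigma^{\Sigma^G}$. Define $\widetilde{\mathrm{ev}} = \mathrm{ev}\circ(\Sigma^{\Sigma^G}\times i_X)\colon \Sigma^{\Sigma^G}\times X\to\Sigma$. Then $(\Sigma^{\Sigma^G},\widetilde{\mathrm{ev}})$ is a weak exponential with base $\Sigma$ and exponent $X$ in the category of locales: for every locale $A$ and every locale map $u\colon A\times X\to\Sigma$ there exists a (not necessarily unique) locale map $v\colon A\to\Sigma^{\Sigma^G}$ with $u=\widetilde{\mathrm{ev}}\circ(v\times X)$.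
   Context: A frame is a complete lattice in which finite meets distribute over arbitrary joins; a locale $X$ is formally a frame $\mathcal{O}X$ (its ''opens''), and a locale map $f\colon X\to Y$ is a frame homomorphism $f^*\colon\mathcal{O}Y\to\mathcal{O}X$ (preserving finite meets and arbitrary joins). $\Sigma$ denotes the Sierpiński locale, whose frame is the free frame on one generator; locale maps $X\to\Sigma$ correspond to elements of $\mathcal{O}X$. For a set $G$, $\Sigma^G$ denotes the locale whose frame is the free frame on $G$ (the frame of downsets of the meet-semilattice of finite subsets of $G$ ordered by reverse inclusion). $\Sigma^G$ is locally compact, so the exponential $\Sigma^{\Sigma^G}$ exists in locales. A presentation $\mathcal{O}X=\langle G\mid R\rangle$ (with $R$ a set of pairs of elements of the free frame on $G$) means $\mathcal{O}X$ is the quotient of the free frame on $G$ by the frame congruence generated by $R$; the quotient homomorphism is $i_X^*$ for a sublocale inclusion $i_X\colon X\hookrightarrow\Sigma^G$. *)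

From Stdlib Require Import List FunctionalExtensionality PropExtensionality ProofIrrelevance.

Set Implicit Arguments.

Record Frame := {
  fcar :> Type;
  fle : fcar -> fcar -> Prop;
  fle_refl : forall a, fle a a;
  fle_trans : forall a b c, fle a b -> fle b c -> fle a c;
  fle_antisym : forall a b, fle a b -> fle b a -> a = b;
  fjoin : (fcar -> Prop) -> fcar;
  fjoin_ub : forall (S : fcar -> Prop) a, S a -> fle a (fjoin S);
  fjoin_least : forall (S : fcar -> Prop) b, (forall a, S a -> fle a b) -> fle (fjoin S) b;
  fmeet : fcar -> fcar -> fcar;
  fmeet_l : forall a b, fle (fmeet a b) a;
  fmeet_r : forall a b, fle (fmeet a b) b;
  fmeet_glb : forall a b c, fle c a -> fle c b -> fle c (fmeet a b);
  ftop : fcar;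
  ftop_greatest : forall a, fle a ftop;
  fdistr : forall a (S : fcar -> Prop),
    fle (fmeet a (fjoin S)) (fjoin (fun y => exists s, S s /\ y = fmeet a s))
}.

Arguments fle {f}.
Arguments fjoin {f}.
Arguments fmeet {f}.
Arguments ftop {f}.

(* Frame homomorphism (= locale map in the opposite direction):
   preserves finite meets and arbitrary joins. *)
Definition frame_hom {F H : Frame} (h : F -> H) : Prop :=
  h ftop = ftop /\
  (forall a b, h (fmeet a b) = fmeet (h a) (h b)) /\
  (forall S : F -> Prop, h (fjoin S) = fjoin (fun y => exists x, S x /\ y = h x)).

(* ---------- The free frame on a set G ----------
   Downsets of the meet-semilattice of finite subsets of G ordered by reverse
   inclusion, i.e. sets of finite subsets (represented by lists) that are
   closed upwards under inclusion. *)
Definition upclosed (G : Type) (D : list G -> Prop) : Prop :=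
  forall s t, D s -> incl s t -> D t.

Definition FFcar (G : Type) := { D : list G -> Prop | upclosed D }.

Lemma FF_eq (G : Type) (D E : FFcar G) :
  (forall s, proj1_sig D s <-> proj1_sig E s) -> D = E.
Proof.
  destruct D as [D hD], E as [E hE]; simpl; intros h.
  assert (D = E) as ->.
  { apply functional_extensionality; intro s; apply propositional_extensionality; apply h. }
  f_equal; apply proof_irrelevance.
Qed.

Definition FFle G (D E : FFcar G) : Prop := forall s, proj1_sig D s -> proj1_sig E s.

Definition FFjoin G (S : FFcar G -> Prop) : FFcar G.
Proof.
  exists (fun s => exists D, S D /\ proj1_sig D s).
  intros s t [D [hS hD]] hst. exists D. split; [exact hS|].
  exact (proj2_sig D s t hD hst).
Defined.

Definition FFmeet G (D E : FFcar G) : FFcar G.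
Proof.
  exists (fun s => proj1_sig D s /\ proj1_sig E s).
  intros s t [h1 h2] hst. split; [exact (proj2_sig D s t h1 hst) | exact (proj2_sig E s t h2 hst)].
Defined.

Definition FFtop G : FFcar G.
Proof. exists (fun _ => True). intros s t _ _; exact I. Defined.

Definition FreeFrame (G : Type) : Frame.
Proof.
  refine {| fcar := FFcar G; fle := @FFle G; fjoin := @FFjoin G;
            fmeet := @FFmeet G; ftop := FFtop G |}.
  - intros a s h; exact h.
  - intros a b c h1 h2 s h; exact (h2 s (h1 s h)).
  - intros a b h1 h2; apply FF_eq; intro s; split; [apply h1|apply h2].
  - intros S a hS s h; exists a; split; assumption.
  - intros S b h s [D [hD hs]]; exact (h D hD s hs).
  - intros a b s [h _]; exact h.
  - intros a b s [_ h]; exact h.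
  - intros a b c h1 h2 s h; split; [exact (h1 s h)|exact (h2 s h)].
  - intros a s _; exact I.
  - intros a S s [ha [D [hD hs]]].
    exists (FFmeet a D). split; [exists D; split; [exact hD|reflexivity]|].
    split; assumption.
Defined.

Definition frame_congruence {F : Frame} (C : F -> F -> Prop) : Prop :=
  (forall a, C a a) /\ (forall a b, C a b -> C b a) /\
  (forall a b c, C a b -> C b c -> C a c) /\
  (forall a a' b b', C a b -> C a' b' -> C (fmeet a a') (fmeet b b')) /\
  (forall P : F -> F -> Prop, (forall a b, P a b -> C a b) ->
     C (fjoin (fun a => exists b, P a b)) (fjoin (fun b => exists a, P a b))).

Definition gen_congruence {F : Frame} (R : F -> F -> Prop) (a b : F) : Prop :=
  forall C : F -> F -> Prop, frame_congruence C -> (forall x y, R x y -> C x y) -> C a b.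

(* ---------- Products of locales = coproducts of frames (C-ideals) ----------
   O(A x B) is the frame of C-ideals of O A x O B: down-closed sets D of pairs
   such that (join S, b) in D whenever S x {b} is contained in D, and
   symmetrically.  Elements of O(A x B) = locale maps A x B -> Sigma. *)
Definition Cideal {F H : Frame} (D : F -> H -> Prop) : Prop :=
  (forall a a' b b', fle a' a -> fle b' b -> D a b -> D a' b') /\
  (forall (S : F -> Prop) b, (forall a, S a -> D a b) -> D (fjoin S) b) /\
  (forall a (T : H -> Prop), (forall b, T b -> D a b) -> D a (fjoin T)).

Definition cgen {F H : Frame} (P : F -> H -> Prop) (a : F) (b : H) : Prop :=
  forall D : F -> H -> Prop, Cideal D -> (forall x y, P x y -> D x y) -> D a b.

(* Given locale maps f : A' -> A and g : B' -> B (frame homs f : O A -> O A',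
   g : O B -> O B'), the inverse image map (f x g)^* : O(A x B) -> O(A' x B'),
   i.e. the coproduct map f (+) g, sending D to the C-ideal generated by
   { (f a, g b) | (a, b) in D }. *)
Definition tensor_map {F H F' H' : Frame} (f : F -> F') (g : H -> H')
  (D : F -> H -> Prop) : F' -> H' -> Prop :=
  cgen (fun x y => exists a b, D a b /\ x = f a /\ y = g b).

Definition rel_eq (F H : Type) (D E : F -> H -> Prop) : Prop :=
  forall a b, D a b <-> E a b.

(* (E, ev) is an exponential Sigma^Y in locales: ev : E x Y -> Sigma (a C-ideal
   of O E (+) O Y) such that every u : A x Y -> Sigma factors as
   ev o (v x Y) for a unique locale map v : A -> E. *)
Definition is_exponential_Sigma (Y E : Frame) (ev : E -> Y -> Prop) : Prop :=
  Cideal ev /\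
  forall (A : Frame) (w : A -> Y -> Prop), Cideal w ->
    exists v : E -> A, frame_hom v /\
      rel_eq (tensor_map v (fun y => y) ev) w /\
      (forall v' : E -> A, frame_hom v' ->
         rel_eq (tensor_map v' (fun y => y) ev) w -> forall e, v' e = v e).

(* Restricting [u : A x X -> Sigma] along [A x iX] gives a map
   [A x Sigma^G -> Sigma], which factors through [ev] by the exponential
   property; functoriality of the product [_ x _] and surjectivity of [iX]
   then show that the same [v] already factors [u] through the restricted
   evaluation. *)
From Stdlib Require Import FunctionalExtensionality PropExtensionality.

Lemma frame_hom_monotone {F H : Frame} (h : F -> H) :
  frame_hom h -> forall a b, fle a b -> fle (h a) (h b).
Proof.
  intros [_ [hmeet _]] a b hab.
  assert (fmeet a b = a) as Hab.
  { apply fle_antisym; [apply fmeet_l | apply fmeet_glb; [apply fle_refl | exact hab]]. }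
  rewrite <- Hab, hmeet. apply fmeet_r.
Qed.

Lemma frame_hom_id (F : Frame) : frame_hom (fun x : F => x).
Proof.
  split; [reflexivity | split; [reflexivity |]].
  intros S. f_equal. apply functional_extensionality; intro y.
  apply propositional_extensionality. split.
  - intro hy; exists y; split; auto.
  - intros [x [hx ->]]; exact hx.
Qed.

Lemma Cideal_cgen {F H : Frame} (P : F -> H -> Prop) : Cideal (cgen P).
Proof.
  split; [| split].
  - intros a a' b b' ha hb hD D hC hP. exact (proj1 hC _ _ _ _ ha hb (hD D hC hP)).
  - intros S b hS D hC hP. apply (proj1 (proj2 hC)). intros a ha. exact (hS a ha D hC hP).
  - intros a T hT D hC hP. apply (proj2 (proj2 hC)). intros b hb. exact (hT b hb D hC hP).
Qed.

Lemma Cideal_comap {F H F' H' : Frame} (f : F' -> F) (g : H' -> H) (D : F -> H -> Prop) :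
  frame_hom f -> frame_hom g -> Cideal D -> Cideal (fun a b => D (f a) (g b)).
Proof.
  intros hf hg [hdown [hjoinl hjoinr]]. split; [| split].
  - intros a a' b b' ha hb hD.
    exact (hdown _ _ _ _ (frame_hom_monotone f hf _ _ ha) (frame_hom_monotone g hg _ _ hb) hD).
  - intros S b hS. rewrite (proj2 (proj2 hf)). apply hjoinl. intros y [x [hx ->]]. auto.
  - intros a T hT. rewrite (proj2 (proj2 hg)). apply hjoinr. intros y [x [hx ->]]. auto.
Qed.

Section TensorMap.

Variables (F H F' H' : Frame) (f : F -> F') (g : H -> H').

Lemma tensor_map_gen (D : F -> H -> Prop) a b :
  D a b -> tensor_map f g D (f a) (g b).
Proof. intros hD C _ hP. apply hP. exists a, b. auto. Qed.

Lemma tensor_map_least (D : F -> H -> Prop) (C : F' -> H' -> Prop) :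
  Cideal C -> (forall a b, D a b -> C (f a) (g b)) ->
  forall x y, tensor_map f g D x y -> C x y.
Proof.
  intros hC hDC x y hxy. apply (hxy C hC).
  intros x0 y0 [a [b [hab [-> ->]]]]. auto.
Qed.

Lemma Cideal_tensor_map (D : F -> H -> Prop) : Cideal (tensor_map f g D).
Proof. apply Cideal_cgen. Qed.

End TensorMap.

Arguments tensor_map_gen {F H F' H'} f g D a b.
Arguments tensor_map_least {F H F' H'} f g D C.
Arguments Cideal_tensor_map {F H F' H'} f g D.

Lemma tensor_map_comp {F H F' H'' : Frame} (f : F -> F') (g : H -> H'')
  (D : F -> H -> Prop) :
  frame_hom f ->
  rel_eq (tensor_map f (fun x => x) (tensor_map (fun e => e) g D)) (tensor_map f g D).
Proof.
  intros hf x y. split.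
  - apply (tensor_map_least f (fun x => x) _ _ (Cideal_tensor_map f g D)).
    apply (tensor_map_least (fun e => e) g _ (fun e z => tensor_map f g D (f e) z)).
    + exact (Cideal_comap f (fun z => z) _ hf (frame_hom_id _) (Cideal_tensor_map f g D)).
    + intros a b hab. exact (tensor_map_gen f g D a b hab).
  - apply (tensor_map_least f g _ _ (Cideal_tensor_map _ _ _)).
    intros a b hab. apply (tensor_map_gen f (fun x => x)).
    exact (tensor_map_gen (fun e => e) g D a b hab).
Qed.

Lemma tensor_map_eq_of_surj {F H A X : Frame} (f : F -> A) (g : H -> X)
  (D : F -> H -> Prop) (u : A -> X -> Prop) :
  frame_hom g -> (forall x, exists b, g b = x) -> Cideal u ->
  rel_eq (tensor_map f (fun y => y) D) (fun a b => u a (g b)) ->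
  rel_eq u (tensor_map f g D).
Proof.
  intros hg hsurj hu hfD a x. split.
  - intro hux. destruct (hsurj x) as [b <-].
    apply (proj2 (hfD a b)) in hux. revert a b hux.
    apply (tensor_map_least f (fun y => y) _ (fun a b => tensor_map f g D a (g b))).
    + exact (Cideal_comap (fun a => a) g _ (frame_hom_id _) hg (Cideal_tensor_map _ _ _)).
    + intros e b heb. exact (tensor_map_gen f g D e b heb).
  - apply (tensor_map_least f g _ u hu). intros e b heb.
    apply (proj1 (hfD (f e) b)). exact (tensor_map_gen f (fun y => y) D e b heb).
Qed.

Theorem proposition3p1
  (G : Type) (R : FreeFrame G -> FreeFrame G -> Prop)
  (X : Frame) (iX : FreeFrame G -> X)
  (hiX_hom : frame_hom iX)
  (hiX_surj : forall x : X, exists a, iX a = x)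
  (hiX_ker : forall a b, iX a = iX b <-> gen_congruence R a b)
  (E : Frame) (ev : E -> FreeFrame G -> Prop)
  (hE : is_exponential_Sigma (FreeFrame G) E ev) :
  let evt : E -> X -> Prop := tensor_map (fun e => e) iX ev in
  forall (A : Frame) (u : A -> X -> Prop), Cideal u ->
    exists v : E -> A, frame_hom v /\ rel_eq u (tensor_map v (fun x => x) evt).
Proof.
  intros evt A u hu.
  destruct hE as [_ hexp].
  destruct (hexp A (fun a b => u a (iX b))
              (Cideal_comap (fun a => a) iX u (frame_hom_id A) hiX_hom hu))
    as [v [hv [hvw _]]].
  exists v. split; [exact hv |].
  intros a x. unfold evt. rewrite (tensor_map_comp v iX ev hv a x).
  exact (tensor_map_eq_of_surj v iX ev u hiX_hom hiX_surj hu hvw a x).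
Qed.
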